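(* Let $(X,d)$ be a separable metric space admitting a weak convergence, and let $p\ge 1$. If $\{\mu_n\}_{n\in\mathbb{N}}$ and $\mu$ in $\mathcal{P}_{p-1}(X)$ satisfy $\mu_n\to\mu$ in $\tau_{\mathrm{w}}^{p-1}$, then $$\max_{x_n\in M_p(\mu_n)}\min_{x\in M_p(\mu)} d(x_n,x)\to 0$$ as $n\to\infty$.
   Context: A convergence $c$ on a set $X$ is a rule assigning at most one point of $X$ as the ''limit'' of each sequence in $X$, such that whenever a sequence has limit $x$, every subsequence also has limit $x$. A convergence $w$ on $X$ is a weak convergence for $(X,d)$ if: (W1) whenever $\sup_n d(x_n,y)<\infty$ for some $y$, some subsequence converges in $w$ to some point of $X$; (W2) whenever $x_n\to x$ in $w$, $d(x,y)\le\liminf_n d(x_n,y)$ for all $y\in X$; (W3) whenever $x_n\to x$ in $w$ and $d(x_n,y)\to d(x,y)$ for some $y\in X$, then $d(x_n,x)\to0$. $(X,d)$ admits a weak convergence if such a $w$ exists. For $r\ge 0$, $\mathcal{P}_r(X)$ is the set of Borel probability measures $\mu$ on $(X,d)$ with $\int_X d^r(x,y)\,d\mu(y)<\infty$ for some (equivalently all) $x\in X$; $\mu_n\to\mu$ in $\tau_{\mathrm{w}}^{r}$ means $\int f\,d\mu_n\to\int f\,d\mu$ for every bounded continuous $f:(X,d)\to\mathbb{R}$ and $\int d^r(x,y)\,d\mu_n(y)\to\int d^r(x,y)\,d\mu(y)$ for all $x\in X$. For $\mu\in\mathcal{P}_{p-1}(X)$, $W_p(\mu,x,x'):=\int_X (d^p(x,y)-d^p(x',y))\,d\mu(y)$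 and $M_p(\mu):=\{x\in X: W_p(\mu,x,x')\le 0 \text{ for all } x'\in X\}$. *)

From HB Require Import structures.
From mathcomp Require Import all_boot all_order all_algebra.
From mathcomp Require Import all_classical all_reals all_analysis.
Set Implicit Arguments. Unset Strict Implicit. Unset Printing Implicit Defensive.
Import Order.TTheory GRing.Theory Num.Theory.
Import numFieldNormedType.Exports.
Local Open Scope classical_set_scope.
Local Open Scope ring_scope.

Section MetricDefs.
Context {R : realType} {X : Type} (d : X -> X -> R).

Definition is_metric : Prop :=
  [/\ (forall x y, 0 <= d x y),
      (forall x y, d x y = 0 <-> x = y),
      (forall x y, d x y = d y x) &
      (forall x y z, d x z <= d x y + d y z)].

Definition dball (x : X) (r : R) : set X := [set y | d x y < r].

Definition dopen (A : set X) : Prop :=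
  forall x, A x -> exists2 r : R, 0 < r & dball x r `<=` A.

Definition dseparable : Prop :=
  exists S : set X, countable S /\
    forall x (e : R), 0 < e -> exists2 s, S s & d x s < e.

Definition dcontinuous (f : X -> R) : Prop :=
  forall x (e : R), 0 < e -> exists2 del : R, 0 < del &
    forall y, d x y < del -> `|f y - f x| < e.

Definition bounded_fun (f : X -> R) : Prop := exists M : R, forall x, `|f x| <= M.

(* a convergence on X: relation "the sequence s has limit x";
   at most one limit per sequence, limits inherited by subsequences *)
Definition is_convergence (c : (nat -> X) -> X -> Prop) : Prop :=
  (forall s x y, c s x -> c s y -> x = y) /\
  (forall s x (phi : nat -> nat), (forall n, (phi n < phi n.+1)%N) ->
      c s x -> c (s \o phi) x).

Definition weak_convergence (c : (nat -> X) -> X -> Prop) : Prop :=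
  is_convergence c /\
  (forall s : nat -> X, (exists y (M : R), forall n, d (s n) y <= M) ->
     exists (phi : nat -> nat) (x : X),
       (forall n, (phi n < phi n.+1)%N) /\ c (s \o phi) x) /\
  (forall s x, c s x -> forall y,
     ((d x y)%:E <= limn_einf (fun n => (d (s n) y)%:E))%E) /\
  (forall s x, c s x -> forall y,
     (fun n => d (s n) y) @ \oo --> d x y ->
     (fun n => d (s n) x) @ \oo --> (0 : R)).

Definition admits_weak_convergence : Prop :=
  exists c, weak_convergence c.

End MetricDefs.

Section MeasureDefs.
Context {R : realType} {dsp : measure_display} {X : measurableType dsp}
  (d : X -> X -> R).

Definition borel_of_metric : Prop :=
  (@measurable dsp X) = <<s dopen d>>.

Definition in_P (r : R) (mu : probability X R) : Prop :=
  exists x : X, (\int[mu]_y ((d x y) `^ r)%:E < +oo)%E.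

Definition tau_w_cvg (r : R) (mu_ : nat -> probability X R)
  (mu : probability X R) : Prop :=
  (forall f : X -> R, dcontinuous d f -> bounded_fun f ->
     (fun n => (\int[mu_ n]_y (f y)%:E)%E) @ \oo --> (\int[mu]_y (f y)%:E)%E) /\
  (forall x : X,
     (fun n => (\int[mu_ n]_y ((d x y) `^ r)%:E)%E) @ \oo
       --> (\int[mu]_y ((d x y) `^ r)%:E)%E).

Definition W_p (p : R) (mu : probability X R) (x x' : X) : \bar R :=
  (\int[mu]_y ((d x y) `^ p - (d x' y) `^ p)%:E)%E.

Definition M_p (p : R) (mu : probability X R) : set X :=
  [set x | forall x' : X, (W_p p mu x x' <= 0)%E].

End MeasureDefs.

(* Suppose the claim fails: along a subsequence there are minimizers [z_n] in
   [M_p(mu_n)] at distance [>= e] from [M_p(mu)].  Comparing [W_p(mu_n, z_n, o)] with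
   the integral of a continuous lower bound [kappa] of
   [(d(z,y)^p - d(o,y)^p) / d(o,z)] shows that the [z_n] stay bounded, so (W1) gives a
   subsequence with a limit [x] for the weak convergence.  Comparing the tail infima
   of [d(z_n, _)] with [d(x, _)] under [mu] yields a point [y] with
   [liminf d(z_n, y) <= d(x, y)]; by (W2) a further subsequence has
   [d(z_n, y) -> d(x, y)], and (W3) upgrades this to [d(z_n, x) -> 0].  Since
   [tau_w^(p-1)] convergence extends to continuous functions of growth
   [O(1 + d(x0, _)^(p-1))], [W_p(mu, x, x') = lim W_p(mu_n, x, x') <= lim O(d(z_n, x))
   = 0], i.e. [x] is in [M_p(mu)], a contradiction. *)

From HB Require Import structures.
From mathcomp Require Import all_boot all_order all_algebra.
From mathcomp Require Import all_classical all_reals all_analysis.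
From mathcomp Require Import lra ring.
Set Implicit Arguments. Unset Strict Implicit. Unset Printing Implicit Defensive.
Import Order.TTheory GRing.Theory Num.Theory.
Import numFieldNormedType.Exports.
Local Open Scope classical_set_scope.
Local Open Scope ring_scope.

Local Notation measurable_EFinP := measurable_realfun.measurable_EFinP.
Local Notation measurable_minr := measurable_realfun.measurable_minr.
Local Notation measurable_maxr := measurable_realfun.measurable_maxr.

Section PowRInequalities.
Context {R : realType}.
Implicit Types (a b p r L e : R).

Lemma nneg_ler_powR r a b : 0 <= r -> 0 <= a -> a <= b -> a `^ r <= b `^ r.
Proof. by move=> r0 a0 ab; rewrite ge0_ler_powR // nnegrE (le_trans a0). Qed.

(* Young's inequality [a b^(p-1) <= a^p/p + b^p (p-1)/p]. *)
Lemma powRB_le p a b : 1 <= p -> 0 <= a -> a <= b ->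
  b `^ p - a `^ p <= p * b `^ (p - 1) * (b - a).
Proof.
move=> p1 a0 ab; have b0 : 0 <= b by apply: le_trans ab.
have [->|pn1] := eqVneq p 1.
  by rewrite !powRr1 // subrr powRr0 !mul1r.
have p1' : 1 < p by rewrite lt_neqAle eq_sym pn1.
have p0 : 0 < p by apply: lt_trans p1'.
have q0 : 0 < p - 1 by rewrite subr_gt0.
have := @conjugate_powR _ a (b `^ (p - 1)) p (p / (p - 1)) a0 (powR_ge0 _ _) p0
  (divr_gt0 p0 q0).
rewrite -powRrM [(p - 1) * _]mulrC divfK ?gt_eqF // invf_div.
have conj : p^-1 + (p - 1) / p = 1 by field; rewrite gt_eqF.
move=> /(_ conj) young.
have Eb : b `^ p = b * b `^ (p - 1) by rewrite mulr_powRB1.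
have young' : p * (a * b `^ (p - 1)) <= a `^ p + (p - 1) * b `^ p.
  have -> : a `^ p + (p - 1) * b `^ p = p * (a `^ p / p + b `^ p * ((p - 1) / p)).
    by field; rewrite gt_eqF.
  by rewrite ler_pM2l.
rewrite Eb in young' *; nra.
Qed.

Lemma powR_superadd p a b : 1 <= p -> 0 <= a -> 0 <= b ->
  a `^ p + b `^ p <= (a + b) `^ p.
Proof.
move=> p1 a0 b0; have p0 : 0 < p by apply: lt_le_trans p1.
have ab0 : 0 <= a + b by rewrite addr_ge0.
rewrite -(mulr_powRB1 a0 p0) -(mulr_powRB1 b0 p0) -(mulr_powRB1 ab0 p0) mulrDl.
have q0 : 0 <= p - 1 by rewrite subr_ge0.
by rewrite lerD // ler_wpM2l // nneg_ler_powR // ?lerDl ?lerDr.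
Qed.

Lemma subr1_le_powR p a : 1 <= p -> 0 <= a -> a - 1 <= a `^ p.
Proof.
move=> p1 a0; have [a1|a1] := leP 1 a.
  by rewrite (le_trans _ (le1r_powR a1 p1)) // gerBl.
by rewrite (le_trans _ (powR_ge0 _ _)) // subr_le0 ltW.
Qed.

Lemma powRD_le r a b : 0 <= r -> 0 <= a -> 0 <= b ->
  (a + b) `^ r <= 2 `^ r * (a `^ r + b `^ r).
Proof.
move=> r0 a0 b0.
have M : a + b <= 2 * Num.max a b.
  by rewrite mulr2n mulrDl mul1r lerD // ?le_max ?lexx ?orbT.
apply: (@le_trans _ _ ((2 * Num.max a b) `^ r)).
  by rewrite nneg_ler_powR // addr_ge0.
rewrite powRM // ?le_max ?a0 // ler_wpM2l ?powR_ge0 //.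
by rewrite /Num.max; case: ifP => _; rewrite ?lerDr ?lerDl powR_ge0.
Qed.

Lemma powR_dist_le p a b L : 1 <= p -> 0 <= a -> 0 <= b -> `|a - b| <= L ->
  `|a `^ p - b `^ p| <= p * L * (2 `^ (p - 1) * (L `^ (p - 1) + b `^ (p - 1))).
Proof.
move=> p1 a0 b0 abL.
have q0 : 0 <= p - 1 by rewrite subr_ge0.
have p0 : 0 <= p by apply: le_trans p1.
have L0 : 0 <= L by apply: le_trans abL.
have ordered (u v : R) : 0 <= u -> u <= v -> v <= b + L -> v - u <= L ->
    v `^ p - u `^ p <= p * L * (2 `^ (p - 1) * (L `^ (p - 1) + b `^ (p - 1))).
  move=> u0 uv vb vuL; apply: le_trans (powRB_le p1 u0 uv) _.
  have vW : v `^ (p - 1) <= 2 `^ (p - 1) * (L `^ (p - 1) + b `^ (p - 1)).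
    apply: le_trans (powRD_le q0 L0 b0).
    by apply: nneg_ler_powR => //; [exact: le_trans uv | rewrite addrC].
  rewrite (_ : p * L * _ = p * (2 `^ (p - 1) * (L `^ (p - 1) + b `^ (p - 1)) * L));
    last by ring.
  by rewrite -mulrA ler_wpM2l // ler_pM // ?powR_ge0 // subr_ge0.
move: abL; rewrite ler_norml => /andP[h1 h2].
have [ab|ba] := leP a b.
  rewrite ler0_norm; last by rewrite subr_le0 nneg_ler_powR.
  by rewrite opprB; apply: ordered => //; [rewrite lerDl | lra].
rewrite ger0_norm; last by rewrite subr_ge0 nneg_ler_powR // ltW.
by apply: ordered => //; [exact: ltW | lra].
Qed.

Lemma powR_continuous_nneg r a e : 0 <= r -> 0 <= a -> 0 < e ->
  exists2 del : R, 0 < del &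
    forall b, 0 <= b -> `|a - b| < del -> `|a `^ r - b `^ r| < e.
Proof.
move=> r0 a0 e0.
have [->|rn0] := eqVneq r 0.
  by exists 1 => // b _ _; rewrite !powRr0 subrr normr0.
have rp : 0 < r by rewrite lt_neqAle eq_sym rn0.
have [->|an0] := eqVneq a 0.
  move/cvgrPdist_lt: (@powR_cvg0 R r rp) => /(_ e e0) /nbhs_ballP [del del0 H].
  exists del => // b b0 ab.
  have [->|bn0] := eqVneq b 0; first by rewrite subrr normr0.
  by rewrite powR0 ?rn0 //; apply: H => //; rewrite lt_neqAle eq_sym bn0.
have ap : 0 < a by rewrite lt_neqAle eq_sym an0.
have := @derivable_powR R 1 r a; rewrite in_itv/= andbT => /(_ ap).
move=> /derivable1_diffP /differentiable_continuous.
move/cvgrPdist_lt => /(_ e e0) /nbhs_ballP [del del0 H].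
by exists del => // b _ ab; apply: H.
Qed.

End PowRInequalities.

Section Continuity.
Context {R : realType} {X : Type} (d : X -> X -> R).
Implicit Types (f g : X -> R).

Lemma dcontinuous_cst c : dcontinuous d (fun _ => c).
Proof. by move=> x e e0; exists 1 => // y _; rewrite subrr normr0. Qed.

Lemma dcontinuousD f g : dcontinuous d f -> dcontinuous d g ->
  dcontinuous d (fun y => f y + g y).
Proof.
move=> hf hg x e e0.
have e2 : 0 < e / 2 by rewrite divr_gt0.
have [d1 d10 H1] := hf x _ e2; have [d2 d20 H2] := hg x _ e2.
exists (Num.min d1 d2); first by rewrite lt_min d10 d20.
move=> y; rewrite lt_min => /andP[/H1 + /H2].
by rewrite !ltr_norml => /andP[a1 a2] /andP[a3 a4]; apply/andP; split; lra.
Qed.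

Lemma dcontinuousZ c f : dcontinuous d f -> dcontinuous d (fun y => c * f y).
Proof.
move=> hf x e e0.
have c1 : 0 < `|c| + 1 by rewrite ltr_wpDl.
have [d1 d10 H1] := hf x (e / (`|c| + 1)) (divr_gt0 e0 c1).
exists d1 => // y /H1 h; rewrite -mulrBr normrM.
apply: (@le_lt_trans _ _ (`|c| * (e / (`|c| + 1)))).
  by rewrite ler_wpM2l // ltW.
rewrite mulrA ltr_pdivrMr //; nra.
Qed.

Lemma dcontinuousB f g : dcontinuous d f -> dcontinuous d g ->
  dcontinuous d (fun y => f y - g y).
Proof.
move=> hf hg; have := dcontinuousD hf (dcontinuousZ (-1) hg).
by congr dcontinuous; apply: funext => y; rewrite mulN1r.
Qed.

Lemma dcontinuousM f g : dcontinuous d f -> dcontinuous d g ->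
  dcontinuous d (fun y => f y * g y).
Proof.
move=> hf hg x e e0.
pose A := `|f x| + 1; pose B := `|g x| + 1.
have A0 : 0 < A by rewrite ltr_wpDl.
have B0 : 0 < B by rewrite ltr_wpDl.
have e1 : 0 < Num.min 1 (e / (4 * B)) by rewrite lt_min ltr01 divr_gt0 // mulr_gt0.
have e2 : 0 < e / (4 * A) by rewrite divr_gt0 // mulr_gt0.
have [d1 d10 H1] := hf x _ e1; have [d2 d20 H2] := hg x _ e2.
exists (Num.min d1 d2); first by rewrite lt_min d10 d20.
move=> y; rewrite lt_min => /andP[/H1 + /H2 hg2]; rewrite lt_min => /andP[hf1 hf2].
have fy : `|f y| <= A.
  have := ler_normD (f y - f x) (f x); rewrite subrK /A; lra.
have -> : f y * g y - f x * g x = f y * (g y - g x) + g x * (f y - f x) by ring.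
apply: le_lt_trans (ler_normD _ _) _; rewrite !normrM.
have t1 : `|f y| * `|g y - g x| <= A * (e / (4 * A)) by apply: ler_pM => //; exact: ltW.
have t2 : `|g x| * `|f y - f x| <= B * (e / (4 * B)).
  by apply: ler_pM => //; [rewrite /B lerDl | exact: ltW].
have t1' : A * (e / (4 * A)) = e / 4 by field; rewrite gt_eqF.
have t2' : B * (e / (4 * B)) = e / 4 by field; rewrite gt_eqF.
lra.
Qed.

Lemma dcontinuous_min f g : dcontinuous d f -> dcontinuous d g ->
  dcontinuous d (fun y => Num.min (f y) (g y)).
Proof.
move=> hf hg x e e0.
have [d1 d10 H1] := hf x _ e0; have [d2 d20 H2] := hg x _ e0.
exists (Num.min d1 d2); first by rewrite lt_min d10 d20.
move=> y; rewrite lt_min => /andP[/H1 + /H2].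
rewrite !ltr_norml => /andP[h1 h2] /andP[h3 h4].
by case: (leP (f y) (g y)) => h5; case: (leP (f x) (g x)) => h6; apply/andP; split; lra.
Qed.

Lemma dcontinuous_max f g : dcontinuous d f -> dcontinuous d g ->
  dcontinuous d (fun y => Num.max (f y) (g y)).
Proof.
move=> hf hg.
have := dcontinuousZ (-1)
  (dcontinuous_min (dcontinuousZ (-1) hf) (dcontinuousZ (-1) hg)).
by congr dcontinuous; apply: funext => y; rewrite !mulN1r -oppr_max opprK.
Qed.

Lemma dcontinuous_powR f r : 0 <= r -> (forall y, 0 <= f y) -> dcontinuous d f ->
  dcontinuous d (fun y => f y `^ r).
Proof.
move=> r0 f0 hf x e e0.
have [del del0 Hd] := powR_continuous_nneg r0 (f0 x) e0.
have [d1 d10 H1] := hf x _ del0.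
by exists d1 => // y /H1 h; rewrite distrC; apply: Hd => //; rewrite distrC.
Qed.

End Continuity.

Section Metric.
Context {R : realType} {X : Type} (d : X -> X -> R) (Hm : is_metric d).

Lemma metric_ge0 x y : 0 <= d x y. Proof. by case: Hm. Qed.
Lemma metricC x y : d x y = d y x. Proof. by case: Hm. Qed.
Lemma metric_triangle_le x y z : d x z <= d x y + d y z. Proof. by case: Hm. Qed.

Lemma metric_lipschitz x y z : `|d x y - d x z| <= d y z.
Proof.
rewrite ler_norml; apply/andP; split.
- have := metric_triangle_le x y z; lra.
- have := metric_triangle_le x z y; rewrite (metricC z y); lra.
Qed.

Lemma lipschitz_dcontinuous (f : X -> R) (L : R) : 0 <= L ->
  (forall y z, `|f y - f z| <= L * d y z) -> dcontinuous d f.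
Proof.
move=> L0 H x e e0; have L1 : 0 < L + 1 by rewrite ltr_wpDl.
exists (e / (L + 1)); first by rewrite divr_gt0.
move=> y dxy; apply: (le_lt_trans (H y x)); rewrite metricC.
apply: (@le_lt_trans _ _ (L * (e / (L + 1)))); first by rewrite ler_wpM2l // ltW.
rewrite mulrA ltr_pdivrMr //; nra.
Qed.

Lemma dcontinuous_dist x : dcontinuous d (d x).
Proof.
by apply: (lipschitz_dcontinuous (L := 1)) => // y z; rewrite mul1r metric_lipschitz.
Qed.

Lemma dcontinuous_dist_powR r x : 0 <= r -> dcontinuous d (fun y => d x y `^ r).
Proof.
move=> r0; apply: dcontinuous_powR => //; [exact: metric_ge0 | exact: dcontinuous_dist].
Qed.

End Metric.

Section Measurability.
Context {R : realType} {dsp : measure_display} {X : measurableType dsp}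
  (d : X -> X -> R) (Hb : borel_of_metric d).

Lemma dcontinuous_measurable f : dcontinuous d f -> measurable_fun setT f.
Proof.
move=> hf; apply: (measurability _ (measurable_realfun.RGenOInfty.measurableE R)) => //.
move=> _ [_ [a ->] <-]; rewrite setTI Hb; apply: sub_sigma_algebra.
move=> y /=; rewrite in_itv /= andbT => ay.
have /(hf y)[del del0 H] : 0 < f y - a by rewrite subr_gt0.
exists del => // z /= /H; rewrite in_itv /= andbT ltr_norml => /andP[h1 _]; lra.
Qed.

End Measurability.

Section RealIntegral.
Context {R : realType} {dsp : measure_display} {X : measurableType dsp}.
Variable P : probability X R.
Implicit Types (f g : X -> R).

Definition rintegrable f := P.-integrable setT (EFin \o f).
Definition rintegral f : R := (\int[P]_y f y)%R.

Lemma rintegrable_cst c : rintegrable (fun _ => c).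
Proof. exact: finite_measure_integrable_cst. Qed.

Lemma le_rintegrable f g : measurable_fun setT f -> (forall y, `|f y| <= g y) ->
  rintegrable g -> rintegrable f.
Proof.
move=> mf fg ig; apply: le_integrable ig => //; first exact/measurable_EFinP.
by move=> y _ /=; rewrite lee_fin (le_trans (fg y)) // ler_norm.
Qed.

Lemma bounded_rintegrable f M : measurable_fun setT f -> (forall y, `|f y| <= M) ->
  rintegrable f.
Proof. by move=> mf fM; apply: (le_rintegrable mf fM); exact: rintegrable_cst. Qed.

Lemma rintegrableD f g : rintegrable f -> rintegrable g ->
  rintegrable (fun y => f y + g y).
Proof. exact: integrableD. Qed.

Lemma rintegrableZ c f : rintegrable f -> rintegrable (fun y => c * f y).
Proof. exact: integrableZl. Qed.

Lemma rintegrableB f g : rintegrable f -> rintegrable g ->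
  rintegrable (fun y => f y - g y).
Proof. exact: integrableB. Qed.

Lemma rintegrable_norm f : rintegrable f -> rintegrable (fun y => `|f y|).
Proof.
case/integrableP => /measurable_EFinP mf fint; apply/integrableP; split.
  by apply/measurable_EFinP; apply: measurableT_comp.
by under eq_integral do rewrite /= normr_id.
Qed.

Lemma ge0_rintegrable f : measurable_fun setT f -> (forall y, 0 <= f y) ->
  (\int[P]_y (f y)%:E < +oo)%E -> rintegrable f.
Proof.
move=> mf f0 fint; apply/integrableP; split; first exact/measurable_EFinP.
by under eq_integral do rewrite /= ger0_norm //.
Qed.

Lemma rintegral_EFin f : rintegrable f -> (\int[P]_y (f y)%:E)%E = (rintegral f)%:E.
Proof. by move=> fint; rewrite /rintegral /Rintegral fineK // integrable_fin_num. Qed.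

Lemma le_rintegral f g : rintegrable f -> rintegrable g -> (forall y, f y <= g y) ->
  rintegral f <= rintegral g.
Proof. by move=> fint gint fg; apply: le_Rintegral. Qed.

Lemma rintegralD f g : rintegrable f -> rintegrable g ->
  rintegral (fun y => f y + g y) = rintegral f + rintegral g.
Proof. exact: RintegralD. Qed.

Lemma rintegralB f g : rintegrable f -> rintegrable g ->
  rintegral (fun y => f y - g y) = rintegral f - rintegral g.
Proof. exact: RintegralB. Qed.

Lemma rintegralZ c f : rintegrable f -> rintegral (fun y => c * f y) = c * rintegral f.
Proof. exact: RintegralZl. Qed.

Lemma rintegral_cst c : rintegral (fun _ => c) = c.
Proof.
by rewrite /rintegral Rintegral_cst // (congr1 fine (probability_setT P)) mulr1.
Qed.

Lemma rintegral_ge0 f : (forall y, 0 <= f y) -> 0 <= rintegral f.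
Proof. by move=> f0; apply: Rintegral_ge0. Qed.

Lemma le_normr_rintegral f : rintegrable f ->
  `|rintegral f| <= rintegral (fun y => `|f y|).
Proof. exact: le_normr_Rintegral. Qed.

Lemma rintegral_dominated_cvg (f_ : nat -> X -> R) f g :
  (forall n, measurable_fun setT (f_ n)) -> measurable_fun setT f ->
  rintegrable g -> (forall n y, `|f_ n y| <= g y) ->
  (forall y, f_ ^~ y @ \oo --> f y) ->
  rintegral (f_ n) @[n --> \oo] --> rintegral f.
Proof.
move=> mf_ mf gint fg cf.
have [|||||fint _] := @dominated_convergence _ _ _ P setT measurableT
  (fun n => EFin \o f_ n) (EFin \o f) (EFin \o g).
- by move=> n; apply/measurable_EFinP.
- exact/measurable_EFinP.
- by apply: aeW => y _ /=; apply: cvg_comp (cf y) _; exact: cvg_id.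
- exact: gint.
- by apply: aeW => y n _ /=; rewrite lee_fin.
by rewrite (rintegral_EFin fint) => /fine_cvg.
Qed.

Lemma rintegral_truncation f e : measurable_fun setT f -> (forall y, 0 <= f y) ->
  rintegrable f -> 0 < e ->
  exists2 K : R, 0 <= K & rintegral f - rintegral (fun y => Num.min (f y) K) < e.
Proof.
move=> mf f0 fint e0.
have : rintegral (fun y => Num.min (f y) k%:R) @[k --> \oo] --> rintegral f.
  apply: (rintegral_dominated_cvg _ mf fint).
  - by move=> k; exact: (measurable_minr mf (measurable_cst _)).
  - move=> k y; rewrite ger0_norm; last by rewrite le_min f0 ler0n.
    by rewrite ge_min lexx.
  - move=> y; apply: cvg_near_cst; have := nbhs_infty_ger (f y).
    by apply: filterS => k fk; rewrite (min_l fk).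
move/cvgrPdist_lt => /(_ e e0) [k _ /(_ k (leqnn k))] fk.
by exists k%:R => //; rewrite (le_lt_trans _ fk) // ler_norm.
Qed.

End RealIntegral.

Definition clamp {R : realType} (M a : R) := Num.max (- M) (Num.min a M).

Lemma clamp_norm_le {R : realType} (M a : R) : 0 <= M -> `|clamp M a| <= M.
Proof.
move=> M0; rewrite /clamp ler_norml le_max lexx ge_max ge_min lexx orbT /= andbT.
by rewrite lerNl (le_trans _ M0) // oppr_le0.
Qed.

Lemma clamp_dist_le {R : realType} (a t C C' K : R) : 0 <= C -> 0 <= C' -> 0 <= K ->
  `|a| <= C + C' * t -> `|a - clamp (C + C' * K) a| <= C' * (t - Num.min t K).
Proof.
move=> C0 C'0 K0; rewrite /clamp ler_norml => /andP[h1 h2].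
case: (leP a (C + C' * K)) => h3; case: (leP t K) => h4;
  case: (leP (- (C + C' * K)) _) => h5; rewrite ler_norml; apply/andP; split; nra.
Qed.

Section Moments.
Context {R : realType} {dsp : measure_display} {X : measurableType dsp}
  (d : X -> X -> R) (Hm : is_metric d) (Hb : borel_of_metric d).
Variables (q : R) (P : probability X R).
Hypotheses (q0 : 0 <= q) (hP : in_P d q P).

Lemma in_P_rintegrable x : rintegrable P (fun y => d x y `^ q).
Proof.
have [x' hx'] := hP.
have dq_meas z : measurable_fun setT (fun y => d z y `^ q).
  exact/(dcontinuous_measurable Hb)/(dcontinuous_dist_powR Hm).
have x'int : rintegrable P (fun y => d x' y `^ q).
  by apply: ge0_rintegrable => // y; apply: powR_ge0.
apply: (@le_rintegrable _ _ _ _ _ (fun y => 2 `^ q * (d x x' `^ q + d x' y `^ q))).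
- exact: dq_meas.
- move=> y; rewrite ger0_norm ?powR_ge0 //.
  apply: le_trans (powRD_le q0 (metric_ge0 Hm _ _) (metric_ge0 Hm _ _)).
  by apply: nneg_ler_powR => //; [exact: metric_ge0 | exact: metric_triangle_le].
- by apply: rintegrableZ; apply: rintegrableD => //; exact: rintegrable_cst.
Qed.

Lemma growth_rintegrable x0 (g : X -> R) C C' : measurable_fun setT g ->
  (forall y, `|g y| <= C + C' * d x0 y `^ q) -> rintegrable P g.
Proof.
move=> mg gb; apply: (le_rintegrable mg gb).
apply: rintegrableD; first exact: rintegrable_cst.
by apply: rintegrableZ; exact: in_P_rintegrable.
Qed.

Lemma rintegral_clamp_le x0 (g : X -> R) (C C' K : R) : 0 <= C -> 0 <= C' -> 0 <= K ->
  measurable_fun setT g -> (forall y, `|g y| <= C + C' * d x0 y `^ q) ->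
  `|rintegral P g - rintegral P (fun y => clamp (C + C' * K) (g y))| <=
    C' * (rintegral P (fun y => d x0 y `^ q)
      - rintegral P (fun y => Num.min (d x0 y `^ q) K)).
Proof.
move=> C0 C'0 K0 mg gb.
have dq_int := in_P_rintegrable x0.
have mh : measurable_fun setT (fun y => d x0 y `^ q).
  exact/(dcontinuous_measurable Hb)/(dcontinuous_dist_powR Hm).
have gint := growth_rintegrable mg gb.
have gKint : rintegrable P (fun y => clamp (C + C' * K) (g y)).
  apply: (bounded_rintegrable P _ (fun y => clamp_norm_le (g y) _)).
    apply: measurable_maxr; first exact: measurable_cst.
    exact: (measurable_minr mg (measurable_cst _)).
  by rewrite addr_ge0 // mulr_ge0.
have hKint : rintegrable P (fun y => Num.min (d x0 y `^ q) K).
  apply: (bounded_rintegrable P (M := K)).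
    exact: (measurable_minr mh (measurable_cst _)).
  by move=> y; rewrite ger0_norm ?ge_min ?lexx ?orbT // le_min powR_ge0 K0.
rewrite -!rintegralB // -rintegralZ; last exact: rintegrableB.
apply: le_trans (le_normr_rintegral (rintegrableB gint gKint)) _.
apply: le_rintegral; first exact/rintegrable_norm/rintegrableB.
  by apply: rintegrableZ; exact: rintegrableB.
by move=> y; apply: clamp_dist_le.
Qed.

End Moments.

Section TauWConvergence.
Context {R : realType} {dsp : measure_display} {X : measurableType dsp}
  (d : X -> X -> R) (Hm : is_metric d) (Hb : borel_of_metric d).
Variables (q : R) (nu : nat -> probability X R) (mu : probability X R).
Hypotheses (q0 : 0 <= q) (hcvg : tau_w_cvg d q nu mu).
Hypotheses (hmu : in_P d q mu) (hnu : forall n, in_P d q (nu n)).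

Lemma tau_w_cvg_bounded f : dcontinuous d f -> (exists M, forall y, `|f y| <= M) ->
  rintegral (nu n) f @[n --> \oo] --> rintegral mu f.
Proof.
move=> fc [M fM]; have := hcvg.1 f fc (ex_intro _ M fM).
rewrite rintegral_EFin; first exact: fine_cvg.
exact: (bounded_rintegrable mu (dcontinuous_measurable Hb fc) fM).
Qed.

Lemma tau_w_cvg_dist_powR x :
  rintegral (nu n) (fun y => d x y `^ q) @[n --> \oo] -->
    rintegral mu (fun y => d x y `^ q).
Proof.
have := hcvg.2 x; rewrite rintegral_EFin; first exact: fine_cvg.
exact: in_P_rintegrable.
Qed.

(* Truncate [h := d x0 _ ^ q] at a level [K] where [h] and [min h K] have close
   [mu]-integrals, clamp [g] accordingly, and compare the clamped integrals,
   which converge by [tau_w_cvg_bounded]. *)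
Lemma tau_w_cvg_growth x0 (g : X -> R) (C C' : R) : 0 <= C -> 0 <= C' ->
  dcontinuous d g -> (forall y, `|g y| <= C + C' * d x0 y `^ q) ->
  rintegral (nu n) g @[n --> \oo] --> rintegral mu g.
Proof.
move=> C0 C'0 gc gb.
pose h y := d x0 y `^ q.
have h0 y : 0 <= h y by apply: powR_ge0.
have hc : dcontinuous d h by exact: dcontinuous_dist_powR.
have mh := dcontinuous_measurable Hb hc.
have mg := dcontinuous_measurable Hb gc.
apply/cvgrPdist_lt => e e0.
pose e' := e / (4 * (C' + 1)).
have e'0 : 0 < e' by rewrite divr_gt0 // mulr_gt0 // ltr_wpDl.
have [K K0 trunc] := rintegral_truncation mh h0 (in_P_rintegrable Hm Hb q0 hmu x0) e'0.
pose hK y := Num.min (h y) K.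
have hKc : dcontinuous d hK by apply: dcontinuous_min => //; exact: dcontinuous_cst.
have hKb y : `|hK y| <= K.
  by rewrite ger0_norm ?ge_min ?lexx ?orbT // le_min h0 K0.
pose M := C + C' * K.
have M0 : 0 <= M by rewrite addr_ge0 // mulr_ge0.
pose gK y := clamp M (g y).
have gKc : dcontinuous d gK.
  apply: dcontinuous_max; first exact: dcontinuous_cst.
  by apply: dcontinuous_min => //; exact: dcontinuous_cst.
have gKb y : `|gK y| <= M by exact: clamp_norm_le.
have clamp_le (P : probability X R) : in_P d q P ->
    `|rintegral P g - rintegral P gK| <= C' * (rintegral P h - rintegral P hK).
  by move=> hP; exact: (rintegral_clamp_le Hm Hb q0 hP C0 C'0 K0 mg gb).
move/cvgrPdist_lt: (tau_w_cvg_dist_powR (x := x0)) => /(_ e' e'0) Eh.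
move/cvgrPdist_lt: (tau_w_cvg_bounded hKc (ex_intro _ K hKb)) => /(_ e' e'0) EhK.
move/cvgrPdist_lt: (tau_w_cvg_bounded gKc (ex_intro _ M gKb)) => /(_ e' e'0) EgK.
near=> n.
have e1 : `|rintegral mu h - rintegral (nu n) h| < e' by near: n.
have e2 : `|rintegral mu hK - rintegral (nu n) hK| < e' by near: n.
have e3 : `|rintegral mu gK - rintegral (nu n) gK| < e' by near: n.
have b1 := clamp_le mu hmu.
have b2 := clamp_le (nu n) (hnu n).
have t1 : C' * (rintegral (nu n) h - rintegral (nu n) hK) <= C' * (3 * e').
  rewrite ler_wpM2l //.
  by move: e1 e2 trunc; rewrite !ltr_norml => /andP[a1 a2] /andP[a3 a4] a5; lra.
have t2 : C' * (rintegral mu h - rintegral mu hK) <= C' * e'.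
  by rewrite ler_wpM2l // ltW.
have ee : e = 4 * (C' + 1) * e'.
  by rewrite /e' mulrC divfK // gt_eqF // mulr_gt0 // ltr_wpDl.
have tri : `|rintegral mu g - rintegral (nu n) g| <=
    `|rintegral mu g - rintegral mu gK| + `|rintegral mu gK - rintegral (nu n) gK|
    + `|rintegral (nu n) gK - rintegral (nu n) g|.
  rewrite (_ : _ - _ = rintegral mu g - rintegral mu gK
    + (rintegral mu gK - rintegral (nu n) gK)
    + (rintegral (nu n) gK - rintegral (nu n) g)); last by ring.
  by apply: le_trans (ler_normD _ _) _; rewrite lerD2r; exact: ler_normD.
rewrite distrC in b2; nra.
Unshelve. all: end_near.
Qed.

End TauWConvergence.

Section DistPowR.
Context {R : realType} {X : Type} (d : X -> X -> R) (Hm : is_metric d).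
Variable p : R.
Hypothesis p1 : 1 <= p.

Lemma dist_powRB_le z x' y :
  `|d z y `^ p - d x' y `^ p| <=
    p * 2 `^ (p - 1) * d z x' * (d z x' `^ (p - 1) + d x' y `^ (p - 1)).
Proof.
have zx' : `|d z y - d x' y| <= d z x'.
  by rewrite (metricC Hm z y) (metricC Hm x' y); exact: metric_lipschitz.
apply: le_trans (powR_dist_le p1 (metric_ge0 Hm z y) (metric_ge0 Hm x' y) zx') _.
by rewrite le_eqVlt; apply/orP; left; apply/eqP; ring.
Qed.

End DistPowR.

Section MinimizersIntegral.
Context {R : realType} {dsp : measure_display} {X : measurableType dsp}
  (d : X -> X -> R) (Hm : is_metric d) (Hb : borel_of_metric d).
Variables (p : R) (P : probability X R).
Hypotheses (p1 : 1 <= p) (hP : in_P d (p - 1) P).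

Lemma dist_powRB_rintegrable z x' : rintegrable P (fun y => d z y `^ p - d x' y `^ p).
Proof.
have q0 : 0 <= p - 1 by rewrite subr_ge0.
have p0 : 0 <= p by apply: le_trans p1.
pose c := p * 2 `^ (p - 1) * d z x'.
apply: (@growth_rintegrable _ _ _ _ Hm Hb _ _ q0 hP x' _ (c * d z x' `^ (p - 1)) c).
  by apply: (dcontinuous_measurable Hb); apply: dcontinuousB;
    exact: dcontinuous_dist_powR.
by move=> y; rewrite -mulrDr; exact: dist_powRB_le.
Qed.

Lemma M_pP z : M_p d p P z <->
  forall x', rintegral P (fun y => d z y `^ p - d x' y `^ p) <= 0.
Proof.
by split=> Mz x'; have := Mz x'; rewrite /W_p rintegral_EFin ?lee_fin //;
  exact: dist_powRB_rintegrable.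
Qed.

Lemma rintegral_dist_powRB_le z x :
  rintegral P (fun y => d x y `^ p - d z y `^ p) <=
    p * 2 `^ (p - 1) * d z x *
      (d z x `^ (p - 1) + rintegral P (fun y => d x y `^ (p - 1))).
Proof.
have q0 : 0 <= p - 1 by rewrite subr_ge0.
have xint := in_P_rintegrable Hm Hb q0 hP x.
set c := p * 2 `^ (p - 1) * d z x.
have bound_int : rintegrable P (fun y => c * d z x `^ (p - 1) + c * d x y `^ (p - 1)).
  by apply: rintegrableD; [exact: rintegrable_cst | exact: rintegrableZ].
rewrite mulrDr -[X in X + _](rintegral_cst P) -rintegralZ // -rintegralD //;
  [| exact: rintegrable_cst | exact: rintegrableZ].
apply: le_rintegral => [|//|y]; first exact: dist_powRB_rintegrable.
rewrite -mulrDr; apply: le_trans (dist_powRB_le Hm p1 z x y).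
by rewrite -normrN opprB ler_norm.
Qed.

End MinimizersIntegral.

(* With [t = d o y], [s = d z y] and [D = d o z >= D0], [kappa p D0 t] is a lower
   bound for [(s ^ p - t ^ p) / D] that is continuous in [y] and tends to [1] as
   [D0] grows: the first term handles [t] small compared to [D], the second one
   the remaining points, where only [s ^ p - t ^ p >= - p t ^ (p - 1) D] holds. *)
Definition kappa_cutoff {R : realType} (D0 t : R) : R :=
  Num.min 1 (Num.max 0 (8 * t / (D0 - 1) - 1)).

Definition kappa {R : realType} (p D0 t : R) : R :=
  Num.max (1 - (4 * t + 1) / D0) 0 - p * t `^ (p - 1) * kappa_cutoff D0 t.

Section Kappa.
Context {R : realType}.
Variable p : R.
Implicit Types (D s t e : R).

Lemma kappa_cutoff_ge0 D0 t : 0 <= kappa_cutoff D0 t.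
Proof. by rewrite le_min ler01 le_max lexx. Qed.

Lemma kappa_cutoff_le1 D0 t : kappa_cutoff D0 t <= 1.
Proof. by rewrite ge_min lexx. Qed.

Lemma kappa_le_powRB D0 D s t : 1 <= p -> 1 < D0 -> D0 <= D -> 0 <= s -> 0 <= t ->
  D <= t + s -> t <= s + D -> D * kappa p D0 t <= s `^ p - t `^ p.
Proof.
move=> p1 D01 D0D s0 t0 tri1 tri2; rewrite /kappa.
have q0 : 0 <= p - 1 by lra.
have D00 : 0 < D0 by lra.
have D0' : 0 < D0 - 1 by lra.
have tq0 : 0 <= t `^ (p - 1) by apply: powR_ge0.
have th0 := kappa_cutoff_ge0 D0 t; have th1 := kappa_cutoff_le1 D0 t.
have far : - (p * t `^ (p - 1) * D) <= s `^ p - t `^ p.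
  have [st|ts] := leP t s.
    have : t `^ p <= s `^ p by apply: nneg_ler_powR; lra.
    have : 0 <= p * t `^ (p - 1) * D by rewrite !mulr_ge0 //; lra.
    lra.
  have := powRB_le p1 s0 (ltW ts).
  have : p * t `^ (p - 1) * (t - s) <= p * t `^ (p - 1) * D.
    by rewrite ler_wpM2l ?mulr_ge0 //; lra.
  lra.
case: (leP (1 - (4 * t + 1) / D0) 0) => ha.
  have h4 : D0 <= 4 * t + 1 by move: ha; rewrite subr_le0 ler_pdivlMr // mul1r.
  have h8 : 1 <= 8 * t / (D0 - 1) - 1 by rewrite lerBrDr ler_pdivlMr //; lra.
  have -> : kappa_cutoff D0 t = 1.
    by rewrite /kappa_cutoff (max_r (le_trans ler01 h8)) (min_l h8).
  rewrite sub0r mulr1 mulrN; lra.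
have h4 : 4 * t + 1 < D0 by move: ha; rewrite subr_gt0 ltr_pdivrMr // mul1r.
have near : D - 2 * t - 1 <= s `^ p - t `^ p.
  have dt : 0 <= D - 2 * t by lra.
  have h1 := powR_superadd p1 dt t0.
  have h2 : (D - 2 * t + t) `^ p <= s `^ p by apply: nneg_ler_powR; lra.
  have h3 := subr1_le_powR p1 dt.
  lra.
have h5 : D * (1 - (4 * t + 1) / D0) <= D - (4 * t + 1).
  rewrite mulrBr mulr1 lerD2l lerN2 mulrA ler_pdivlMr // mulrC ler_pM2r //; lra.
have h6 : 0 <= D * (p * t `^ (p - 1) * kappa_cutoff D0 t) by rewrite !mulr_ge0 //; lra.
rewrite mulrBr; lra.
Qed.

Lemma kappa_norm_le D0 t : 1 <= p -> 0 <= D0 -> 0 <= t ->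
  `|kappa p D0 t| <= 1 + p * t `^ (p - 1).
Proof.
move=> p1 D00 t0; rewrite /kappa.
have th0 := kappa_cutoff_ge0 D0 t; have th1 := kappa_cutoff_le1 D0 t.
have c0 : 0 <= (4 * t + 1) / D0 by rewrite divr_ge0 //; lra.
have A0 : 0 <= Num.max (1 - (4 * t + 1) / D0) 0 by rewrite le_max lexx orbT.
have A1 : Num.max (1 - (4 * t + 1) / D0) 0 <= 1 by rewrite ge_max ler01 andbT; lra.
have P0 : 0 <= p * t `^ (p - 1) by rewrite mulr_ge0 ?powR_ge0 //; lra.
have h1 : p * t `^ (p - 1) * kappa_cutoff D0 t <= p * t `^ (p - 1).
  by rewrite -[leRHS]mulr1 ler_wpM2l.
have h2 : 0 <= p * t `^ (p - 1) * kappa_cutoff D0 t by rewrite mulr_ge0.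
rewrite ler_norml; apply/andP; split; lra.
Qed.

Lemma kappa_near1 D0 t e : 0 <= t -> 0 < e ->
  8 * t + 2 + (4 * t + 1) / e <= D0 -> `|1 - kappa p D0 t| < e.
Proof.
move=> t0 e0 hD; rewrite /kappa.
have c0 : 0 <= (4 * t + 1) / e by rewrite divr_ge0 //; lra.
have D0' : 0 < D0 - 1 by lra.
have D00 : 0 < D0 by lra.
have h8 : 8 * t / (D0 - 1) - 1 <= 0 by rewrite subr_le0 ler_pdivrMr //; lra.
rewrite /kappa_cutoff (max_l h8) (min_r ler01) mulr0 subr0.
have hc : (4 * t + 1) / D0 < e.
  rewrite ltr_pdivrMr //.
  have : 4 * t + 1 <= (4 * t + 1) / e * e by rewrite divfK ?gt_eqF.
  have : (4 * t + 1) / e * e < D0 * e by rewrite ltr_pM2r //; lra.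
  lra.
have hc1 : (4 * t + 1) / D0 <= 1 by rewrite ler_pdivrMr //; lra.
have hc0 : 0 <= (4 * t + 1) / D0 by rewrite divr_ge0 //; lra.
by rewrite max_l ?ger0_norm; lra.
Qed.

End Kappa.

Section BoundedMinimizers.
Context {R : realType} {dsp : measure_display} {X : measurableType dsp}
  (d : X -> X -> R) (Hm : is_metric d) (Hb : borel_of_metric d).
Variables (p : R) (nu : nat -> probability X R) (mu : probability X R).
Hypotheses (p1 : 1 <= p) (hcvg : tau_w_cvg d (p - 1) nu mu).
Hypotheses (hmu : in_P d (p - 1) mu) (hnu : forall n, in_P d (p - 1) (nu n)).

Let q0 : 0 <= p - 1. Proof. by rewrite subr_ge0. Qed.
Let p0 : 0 <= p. Proof. by apply: le_trans p1. Qed.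

Lemma dcontinuous_kappa o D0 : dcontinuous d (fun y => kappa p D0 (d o y)).
Proof.
have dZ c : dcontinuous d (fun y => c * d o y).
  exact/dcontinuousZ/dcontinuous_dist.
rewrite /kappa /kappa_cutoff; apply: dcontinuousB.
  apply: dcontinuous_max; last exact: dcontinuous_cst.
  apply: dcontinuousB; first exact: dcontinuous_cst.
  apply: dcontinuousM; last exact: dcontinuous_cst.
  by apply: dcontinuousD; [exact: dZ | exact: dcontinuous_cst].
apply: dcontinuousM; first exact/dcontinuousZ/dcontinuous_dist_powR.
apply: dcontinuous_min; first exact: dcontinuous_cst.
apply: dcontinuous_max; first exact: dcontinuous_cst.
apply: dcontinuousB; last exact: dcontinuous_cst.
by apply: dcontinuousM; [exact: dZ | exact: dcontinuous_cst].
Qed.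

Lemma exists_kappa_rintegral_gt o :
  exists2 D0 : R, 1 < D0 & 1 / 2 < rintegral mu (fun y => kappa p D0 (d o y)).
Proof.
have kappa_cvg : rintegral mu (fun y => kappa p k%:R (d o y)) @[k --> \oo] -->
    rintegral mu (fun _ => 1).
  apply: (@rintegral_dominated_cvg _ _ _ _ _ _ (fun y => 1 + p * d o y `^ (p - 1))).
  - by move=> k; apply: (dcontinuous_measurable Hb); exact: dcontinuous_kappa.
  - exact: measurable_cst.
  - apply: rintegrableD; first exact: rintegrable_cst.
    by apply: rintegrableZ; apply: in_P_rintegrable.
  - by move=> k y; apply: kappa_norm_le => //; exact: metric_ge0.
  - move=> y; apply/cvgrPdist_lt => e e0.
    have := nbhs_infty_ger (8 * d o y + 2 + (4 * d o y + 1) / e).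
    by apply: filterS => k hk; apply: kappa_near1 => //; exact: metric_ge0.
rewrite rintegral_cst in kappa_cvg.
have half : 0 < 1 / 2 :> R by rewrite divr_gt0.
move/cvgrPdist_lt: kappa_cvg => /(_ _ half) kappa_near.
have [k [k2 hk]] : exists k, (2 <= k)%N /\
    `|1 - rintegral mu (fun y => kappa p k%:R (d o y))| < 1 / 2.
  by apply: (filter_ex (F := \oo)); near=> k; split; near: k; [exact: nbhs_infty_ge |].
exists k%:R; first by rewrite (@lt_le_trans _ _ 2%:R) ?ltr1n ?ler_nat.
by move: hk; rewrite ltr_norml => /andP[a1 a2]; lra.
Unshelve. all: end_near.
Qed.

(* If [d o z >= D0] then [W_p(nu n, z, o) >= d o z * \int kappa] by
   [kappa_le_powRB], and the latter integral is eventually positive. *)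
Lemma minimizers_bounded o (z : nat -> X) : (forall n, M_p d p (nu n) (z n)) ->
  exists D0 : R, \forall n \near \oo, d o (z n) < D0.
Proof.
move=> hz; have [D0 D01 hD0] := exists_kappa_rintegral_gt o.
pose f y := kappa p D0 (d o y).
have fb y : `|f y| <= 1 + p * d o y `^ (p - 1).
  by apply: kappa_norm_le => //; [exact: ltW (lt_trans ltr01 D01) | exact: metric_ge0].
have f_cvg := tau_w_cvg_growth Hm Hb q0 hcvg hmu hnu ler01 p0
  (dcontinuous_kappa o D0) fb.
have half : 0 < 1 / 2 :> R by rewrite divr_gt0.
move/cvgrPdist_lt: f_cvg => /(_ _ half) f_near.
exists D0; near=> n.
have fint : rintegrable (nu n) f.
  apply: growth_rintegrable fb => //; apply: (dcontinuous_measurable Hb).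
  exact: dcontinuous_kappa.
have f_pos : 0 < rintegral (nu n) f.
  have : `|rintegral mu f - rintegral (nu n) f| < 1 / 2 by near: n.
  by move: hD0; rewrite -/f ltr_norml => ? /andP[? ?]; lra.
rewrite ltNge; apply/negP => D0z.
have W_le0 := (M_pP Hm Hb p1 (hnu n) (z n)).1 (hz n) o.
have : rintegral (nu n) (fun y => d o (z n) * f y) <=
    rintegral (nu n) (fun y => d (z n) y `^ p - d o y `^ p).
  apply: le_rintegral; [exact: rintegrableZ | exact: dist_powRB_rintegrable |].
  move=> y; apply: kappa_le_powRB => //; try exact: metric_ge0.
  - apply: le_trans (metric_triangle_le Hm o y (z n)) _.
    by rewrite (metricC Hm y) addrC.
  - by apply: le_trans (metric_triangle_le Hm o (z n) y) _; rewrite addrC.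
rewrite rintegralZ //.
have : 0 < d o (z n) * rintegral (nu n) f.
  by rewrite mulr_gt0 // (lt_le_trans _ D0z) // (lt_trans ltr01 D01).
lra.
Unshelve. all: end_near.
Qed.

End BoundedMinimizers.

Definition increasing_index (phi : nat -> nat) := forall n, (phi n < phi n.+1)%N.

Lemma increasing_index_ge phi : increasing_index phi -> forall n, (n <= phi n)%N.
Proof. by move=> phi_incr; elim=> [//|n ih]; apply: leq_ltn_trans ih _. Qed.

Lemma increasing_index_lt phi : increasing_index phi ->
  forall m n, (m < n)%N -> (phi m < phi n)%N.
Proof.
move=> phi_incr m; elim=> [//|n ih]; rewrite ltnS leq_eqVlt => /predU1P[->|/ih mn].
  exact: phi_incr.
exact: ltn_trans mn (phi_incr n).
Qed.

Lemma increasing_index_comp phi psi : increasing_index phi -> increasing_index psi ->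
  increasing_index (phi \o psi).
Proof. by move=> phi_incr psi_incr n /=; apply: increasing_index_lt. Qed.

Lemma increasing_index_addn N : increasing_index (addn^~ N).
Proof. by move=> n; rewrite addSn. Qed.

Lemma increasing_index_cvgny phi : increasing_index phi -> phi @ \oo --> \oo.
Proof.
move=> phi_incr; apply/cvgnyPge => A; near=> n.
by apply: leq_trans (increasing_index_ge phi_incr n); near: n; exact: nbhs_infty_ge.
Unshelve. all: end_near.
Qed.

Lemma cvg_subseq {T : Type} (F : set_system T) (u : nat -> T) phi :
  increasing_index phi -> u @ \oo --> F -> (u \o phi) @ \oo --> F.
Proof. by move=> /increasing_index_cvgny; exact: cvg_comp. Qed.

Lemma tau_w_cvg_subseq {R : realType} {dsp : measure_display} {X : measurableType dsp}
  (d : X -> X -> R) r nu mu phi :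
  increasing_index phi -> tau_w_cvg d r nu mu -> tau_w_cvg d r (nu \o phi) mu.
Proof.
move=> phi_incr [bcvg mcvg]; split.
  by move=> f fc fb; exact: cvg_subseq (bcvg f fc fb).
by move=> x; exact: cvg_subseq (mcvg x).
Qed.

Lemma increasing_index_choice (P : nat -> nat -> Prop) :
  (forall N k, exists n, (N <= n)%N /\ P k n) ->
  exists2 phi, increasing_index phi & forall k, P k (phi k).
Proof.
move=> hP; have pick N k : {n | (N <= n)%N /\ P k n} by exact: cid.
pose phi := fix phi k := match k with
  | 0 => sval (pick 0%N 0%N)
  | k'.+1 => sval (pick (phi k').+1 k'.+1) end.
exists phi; first by move=> k /=; case: (svalP (pick (phi k).+1 k.+1)).
case=> [|k] /=; first by case: (svalP (pick 0%N 0%N)).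
by case: (svalP (pick (phi k).+1 k.+1)).
Qed.

Lemma not_near_infty_subseq (P : nat -> Prop) : ~ (\forall n \near \oo, P n) ->
  exists2 phi, increasing_index phi & forall k, ~ P (phi k).
Proof.
move=> not_near; apply: (increasing_index_choice (P := fun _ n => ~ P n)) => N _.
apply: contrapT => hN; apply: not_near; exists N => // n /= Nn.
by apply: contrapT => nP; apply: hN; exists n.
Qed.

Lemma lt_limn_einf_near {R : realType} (u : nat -> R) (l e : R) :
  (l%:E <= limn_einf (fun n => (u n)%:E))%E -> 0 < e ->
  \forall n \near \oo, l - e < u n.
Proof.
move=> hl e0.
rewrite limn_einf_lim (cvg_lim _ (@cvg_einfs_sup _ _)) in hl; last first.
  exact: ereal_hausdorff.
have : ((l - e)%:E < ereal_sup (range (einfs (fun n => (u n)%:E))))%E.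
  by apply: lt_le_trans hl; rewrite lte_fin; lra.
move=> /ereal_sup_gt [_ [N _ <-]] hN.
exists N => // n /= hn; rewrite -lte_fin; apply: lt_le_trans hN _.
by apply: ereal_inf_lbound; exists n.
Qed.

Lemma subseq_cvg_liminf {R : realType} (u : nat -> R) (l : R) :
  (forall N (e : R), 0 < e -> exists n, (N <= n)%N /\ u n < l + e) ->
  (l%:E <= limn_einf (fun n => (u n)%:E))%E ->
  exists2 psi, increasing_index psi & (u \o psi) @ \oo --> l.
Proof.
move=> up low.
have [psi psi_incr psi_up] : exists2 psi, increasing_index psi &
    forall k, u (psi k) < l + 1 / k.+1%:R.
  apply: (increasing_index_choice (P := fun k n => u n < l + 1 / k.+1%:R)) => N k.
  by apply: up; rewrite divr_gt0 // ltr0n.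
exists psi => //; apply/cvgrPdist_lt => e e0.
have low_psi := increasing_index_cvgny psi_incr (lt_limn_einf_near low e0).
near=> k.
have ke : 1 / k.+1%:R < e.
  rewrite ltr_pdivrMr ?ltr0n // -ltr_pdivrMl // mulr1.
  by apply: (@le_lt_trans _ _ k%:R); [near: k; exact: nbhs_infty_ger | rewrite ltr_nat].
have ul : l - e < u (psi k) by near: k.
rewrite /= ltr_norml; move: ke ul (psi_up k).
by move: (u (psi k)) (1 / k.+1%:R) => a b *; apply/andP; split; lra.
Unshelve. all: end_near.
Qed.

Section TailInfimum.
Context {R : realType} {X : Type} (d : X -> X -> R) (Hm : is_metric d).
Variable z : nat -> X.

Definition tail_inf N y := inf [set d (z n) y | n in [set n | (N <= n)%N]].

Lemma tail_inf_le N y n : (N <= n)%N -> tail_inf N y <= d (z n) y.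
Proof.
move=> Nn; apply: ge_inf; last by exists n.
by exists 0 => _ [k _ <-]; exact: metric_ge0.
Qed.

Lemma tail_inf_ge N y c : (forall n, (N <= n)%N -> c <= d (z n) y) -> c <= tail_inf N y.
Proof.
move=> zc; apply: lb_le_inf; first by exists (d (z N) y), N => /=.
by move=> _ [n Nn <-]; exact: zc.
Qed.

Lemma tail_inf_ge0 N y : 0 <= tail_inf N y.
Proof. by apply: tail_inf_ge => n _; exact: metric_ge0. Qed.

Lemma tail_inf_homo N N' y : (N <= N')%N -> tail_inf N y <= tail_inf N' y.
Proof.
by move=> NN'; apply: tail_inf_ge => n N'n; apply: tail_inf_le; exact: leq_trans N'n.
Qed.

Lemma tail_inf_lipschitz N y y' : `|tail_inf N y - tail_inf N y'| <= d y y'.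
Proof.
rewrite ler_norml; apply/andP; split.
- have : tail_inf N y' - d y y' <= tail_inf N y.
    apply: tail_inf_ge => n Nn; have := tail_inf_le y' Nn.
    have := metric_triangle_le Hm (z n) y y'; lra.
  lra.
- have : tail_inf N y - d y y' <= tail_inf N y'.
    apply: tail_inf_ge => n Nn; have := tail_inf_le y Nn.
    have := metric_triangle_le Hm (z n) y' y; rewrite (metricC Hm y' y); lra.
  lra.
Qed.

Lemma dcontinuous_tail_inf N : dcontinuous d (tail_inf N).
Proof.
apply: (lipschitz_dcontinuous Hm (L := 1)) => // y y'.
by rewrite mul1r tail_inf_lipschitz.
Qed.

Lemma tail_inf_ge_sub x B N y : (forall n, d (z n) x <= B) -> d x y - B <= tail_inf N y.
Proof.
move=> zB; apply: tail_inf_ge => n _; have := metric_triangle_le Hm x (z n) y.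
by rewrite (metricC Hm x (z n)); have := zB n; lra.
Qed.

End TailInfimum.

(* Let [m_N] be the tail infimum of [d (z n) _] and assume, towards a contradiction,
   that [d x y < m_N y] for some [N], at every [y].  Minimality of [z n] forces
   [\int (m_N ^ p - d x _ ^ p) d mu <= 0]; splitting this integrand into a
   nonnegative part [tail_excess], which grows with [N], and a part [tail_deficit]
   whose integral vanishes as [N] grows, gives [\int tail_excess N d mu <= 0] for
   all [N], although [min 1 (N * tail_excess N)] tends to [1] pointwise. *)
Section LiminfDist.
Context {R : realType} {dsp : measure_display} {X : measurableType dsp}
  (d : X -> X -> R) (Hm : is_metric d) (Hb : borel_of_metric d).
Variables (p : R) (nu : nat -> probability X R) (mu : probability X R).
Hypotheses (p1 : 1 <= p) (hcvg : tau_w_cvg d (p - 1) nu mu).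
Hypotheses (hmu : in_P d (p - 1) mu) (hnu : forall n, in_P d (p - 1) (nu n)).
Variables (z : nat -> X) (x : X) (B : R).
Hypotheses (hz : forall n, M_p d p (nu n) (z n)) (hB : forall n, d (z n) x <= B).

Let q0 : 0 <= p - 1. Proof. by rewrite subr_ge0. Qed.
Let p0 : 0 < p. Proof. by apply: lt_le_trans p1. Qed.
Let B0 : 0 <= B. Proof. exact: le_trans (metric_ge0 Hm _ _) (hB 0). Qed.

Local Notation m := (tail_inf d z).

Definition tail_gain N y := Num.min (m N y `^ p - d x y `^ p) 1.
Definition tail_excess N y := Num.min ((Num.max (m N y - d x y) 0) `^ p) 1.
Definition tail_deficit N y := Num.max 0 (d x y `^ p - m N y `^ p).
Definition tail_indicator N y := Num.min 1 (N%:R * tail_excess N y).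

Lemma powR_sub_tail_inf_le N y : d x y `^ p - m N y `^ p <= p * B * d x y `^ (p - 1).
Proof.
have bnd0 : 0 <= p * B * d x y `^ (p - 1) by rewrite !mulr_ge0 ?powR_ge0 // ltW.
have [xm|mx] := leP (d x y) (m N y).
  have : d x y `^ p <= m N y `^ p.
    by apply: nneg_ler_powR; [exact: ltW | exact: metric_ge0 |].
  lra.
have := powRB_le p1 (tail_inf_ge0 Hm z N y) (ltW mx).
have : p * d x y `^ (p - 1) * (d x y - m N y) <= p * B * d x y `^ (p - 1).
  rewrite mulrAC ler_wpM2r ?powR_ge0 // ler_wpM2l ?(ltW p0) //.
  by have := tail_inf_ge_sub Hm N y hB; lra.
lra.
Qed.

Lemma tail_gain_norm_le N y : `|tail_gain N y| <= 1 + p * B * d x y `^ (p - 1).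
Proof.
have := powR_sub_tail_inf_le N y.
have : 0 <= p * B * d x y `^ (p - 1) by rewrite !mulr_ge0 ?powR_ge0 // ltW.
rewrite /tail_gain ler_norml le_min ge_min => ? ?; apply/andP; split.
  by apply/andP; split; lra.
by apply/orP; right; lra.
Qed.

Lemma tail_deficit_norm_le N y : `|tail_deficit N y| <= p * B * d x y `^ (p - 1).
Proof.
have := powR_sub_tail_inf_le N y.
have : 0 <= p * B * d x y `^ (p - 1) by rewrite !mulr_ge0 ?powR_ge0 // ltW.
by rewrite /tail_deficit ger0_norm ?le_max ?lexx // ge_max => -> ->.
Qed.

Lemma tail_excess_ge0 N y : 0 <= tail_excess N y.
Proof. by rewrite le_min powR_ge0 ler01. Qed.

Lemma tail_excess_le1 N y : tail_excess N y <= 1.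
Proof. by rewrite ge_min lexx orbT. Qed.

Lemma tail_excess_homo N N' y : (N <= N')%N -> tail_excess N y <= tail_excess N' y.
Proof.
move=> NN'; rewrite /tail_excess le_min ge_min ge_min lexx !orbT andbT.
apply/orP; left.
apply: nneg_ler_powR; [exact: ltW | by rewrite le_max lexx orbT |].
rewrite ge_max le_max le_max lexx orbT andbT; apply/orP; left.
by have := tail_inf_homo Hm z y NN'; lra.
Qed.

Lemma tail_indicator_ge0 N y : 0 <= tail_indicator N y.
Proof. by rewrite le_min ler01 mulr_ge0 // tail_excess_ge0. Qed.

Lemma tail_indicator_le1 N y : tail_indicator N y <= 1.
Proof. by rewrite ge_min lexx. Qed.

Lemma tail_excess_sub_deficit_le N y :
  tail_excess N y - tail_deficit N y <= tail_gain N y.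
Proof.
rewrite /tail_excess /tail_deficit /tail_gain.
have dx0 := metric_ge0 Hm x y; have m0 := tail_inf_ge0 Hm z N y.
have [xm|mx] := leP (d x y) (m N y).
  have pm : d x y `^ p <= m N y `^ p by apply: nneg_ler_powR => //; exact: ltW.
  have mx0 : 0 <= m N y - d x y by lra.
  rewrite (max_l mx0) (max_l (_ : d x y `^ p - m N y `^ p <= 0)); last lra.
  have := powR_superadd p1 mx0 dx0; rewrite subrK => sa.
  rewrite subr0 le_min; apply/andP; split; last by rewrite ge_min lexx orbT.
  by rewrite ge_min; apply/orP; left; lra.
rewrite (max_r (_ : m N y - d x y <= 0)); last lra.
rewrite powR0 ?gt_eqF // (min_l ler01).
have pm : m N y `^ p <= d x y `^ p.
  by apply: nneg_ler_powR; [exact: ltW | exact: m0 | exact: ltW].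
rewrite (max_r (_ : 0 <= d x y `^ p - m N y `^ p)); last lra.
rewrite (min_l (_ : m N y `^ p - d x y `^ p <= 1)); lra.
Qed.

Lemma dcontinuous_tail_gain N : dcontinuous d (tail_gain N).
Proof.
apply: dcontinuous_min; last exact: dcontinuous_cst.
apply: dcontinuousB; last exact/(dcontinuous_dist_powR Hm)/ltW.
apply: dcontinuous_powR; first exact: ltW.
  exact: tail_inf_ge0.
exact: dcontinuous_tail_inf.
Qed.

Lemma dcontinuous_tail_excess N : dcontinuous d (tail_excess N).
Proof.
apply: dcontinuous_min; last exact: dcontinuous_cst.
apply: dcontinuous_powR; [exact: ltW | by move=> y; rewrite le_max lexx orbT |].
apply: dcontinuous_max; last exact: dcontinuous_cst.
by apply: dcontinuousB; [exact: dcontinuous_tail_inf | exact: dcontinuous_dist].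
Qed.

Lemma dcontinuous_tail_deficit N : dcontinuous d (tail_deficit N).
Proof.
apply: dcontinuous_max; first exact: dcontinuous_cst.
apply: dcontinuousB; first exact/(dcontinuous_dist_powR Hm)/ltW.
apply: dcontinuous_powR; first exact: ltW.
  exact: tail_inf_ge0.
exact: dcontinuous_tail_inf.
Qed.

Lemma dcontinuous_tail_indicator N : dcontinuous d (tail_indicator N).
Proof.
apply: dcontinuous_min; first exact: dcontinuous_cst.
exact/dcontinuousZ/dcontinuous_tail_excess.
Qed.

Lemma rintegrable_tail_gain P N : in_P d (p - 1) P -> rintegrable P (tail_gain N).
Proof.
move=> hP; apply: (growth_rintegrable Hm Hb q0 hP _ (tail_gain_norm_le N)).
exact/(dcontinuous_measurable Hb)/dcontinuous_tail_gain.
Qed.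

Lemma rintegrable_tail_excess P N : rintegrable P (tail_excess N).
Proof.
apply: (bounded_rintegrable P (M := 1)).
  exact/(dcontinuous_measurable Hb)/dcontinuous_tail_excess.
by move=> y; rewrite ger0_norm ?tail_excess_ge0 ?tail_excess_le1.
Qed.

Lemma rintegrable_tail_deficit P N : in_P d (p - 1) P -> rintegrable P (tail_deficit N).
Proof.
move=> hP; apply: le_rintegrable (tail_deficit_norm_le N) _.
  exact/(dcontinuous_measurable Hb)/dcontinuous_tail_deficit.
exact/rintegrableZ/(in_P_rintegrable Hm Hb q0 hP).
Qed.

Lemma rintegral_tail_gain_le0 N : rintegral mu (tail_gain N) <= 0.
Proof.
have gain_cvg := tau_w_cvg_growth Hm Hb q0 hcvg hmu hnu ler01
  (mulr_ge0 (ltW p0) B0) (dcontinuous_tail_gain N) (tail_gain_norm_le N).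
rewrite leNgt; apply/negP => pos.
move/cvgrPdist_lt: gain_cvg => /(_ _ pos) gain_near.
have [n [Nn gain_n]] : exists n, (N <= n)%N /\
    `|rintegral mu (tail_gain N) - rintegral (nu n) (tail_gain N)| <
      rintegral mu (tail_gain N).
  apply: (filter_ex (F := \oo)); near=> n.
  by split; near: n => //; exact: nbhs_infty_ge.
have W_le0 := (M_pP Hm Hb p1 (hnu n) (z n)).1 (hz n) x.
have : rintegral (nu n) (tail_gain N) <=
    rintegral (nu n) (fun y => d (z n) y `^ p - d x y `^ p).
  apply: le_rintegral; [exact: rintegrable_tail_gain | exact: dist_powRB_rintegrable |].
  move=> y; rewrite /tail_gain ge_min lerD2r; apply/orP; left.
  by apply: nneg_ler_powR; [exact: ltW | exact: tail_inf_ge0 | exact: tail_inf_le].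
by move: gain_n; rewrite ltr_norml => /andP[a1 a2]; lra.
Unshelve. all: end_near.
Qed.

Section DistLtTailInf.
Hypothesis dist_lt_tail_inf : forall y, exists N, d x y < m N y.

Lemma tail_deficit_near0 y : \forall N \near \oo, tail_deficit N y = 0.
Proof.
have [N1 xm] := dist_lt_tail_inf y.
near=> N.
have N1N : (N1 <= N)%N by near: N; exact: nbhs_infty_ge.
have := tail_inf_homo Hm z y N1N => mN.
have : d x y `^ p <= m N y `^ p.
  by apply: nneg_ler_powR; [exact: ltW | exact: metric_ge0 | lra].
by rewrite /tail_deficit => pm; apply: max_l; lra.
Unshelve. all: end_near.
Qed.

Lemma rintegral_tail_deficit_cvg0 : rintegral mu (tail_deficit N) @[N --> \oo] --> 0.
Proof.
rewrite -[X in _ --> X](rintegral_cst mu 0).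
apply: (@rintegral_dominated_cvg _ _ _ mu _ _ (fun y => p * B * d x y `^ (p - 1))).
- by move=> N; apply: (dcontinuous_measurable Hb); exact: dcontinuous_tail_deficit.
- exact: measurable_cst.
- exact/rintegrableZ/(in_P_rintegrable Hm Hb q0 hmu).
- move=> N y; exact: tail_deficit_norm_le.
- by move=> y; apply: cvg_near_cst; exact: tail_deficit_near0.

Qed.

Lemma rintegral_tail_excess_le0 N0 : rintegral mu (tail_excess N0) <= 0.
Proof.
rewrite leNgt; apply/negP => pos.
move/cvgrPdist_lt: rintegral_tail_deficit_cvg0 => /(_ _ pos) deficit_near.
have [N [N0N deficit_N]] : exists N, (N0 <= N)%N /\
    `|0 - rintegral mu (tail_deficit N)| < rintegral mu (tail_excess N0).
  apply: (filter_ex (F := \oo)); near=> N.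
  by split; near: N => //; exact: nbhs_infty_ge.
have deficit_int := rintegrable_tail_deficit N hmu.
have excess_homo : rintegral mu (tail_excess N0) <= rintegral mu (tail_excess N).
  apply: le_rintegral; rewrite ?rintegrable_tail_excess // => y.
  exact: tail_excess_homo.
have excess_le : rintegral mu (tail_excess N) <=
    rintegral mu (tail_gain N) + rintegral mu (tail_deficit N).
  rewrite -rintegralD //; last exact: rintegrable_tail_gain.
  apply: le_rintegral; rewrite ?rintegrable_tail_excess //.
    by apply: rintegrableD => //; exact: rintegrable_tail_gain.
  by move=> y; rewrite -lerBlDr; exact: tail_excess_sub_deficit_le.
move: deficit_N; rewrite sub0r normrN ger0_norm; last first.
  by apply: rintegral_ge0 => y; rewrite /tail_deficit le_max lexx.
move: excess_homo excess_le (rintegral_tail_gain_le0 N).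
move: (rintegral mu (tail_excess N0)) (rintegral mu (tail_excess N)).
by move: (rintegral mu (tail_gain N)) (rintegral mu (tail_deficit N)) => *; lra.
Unshelve. all: end_near.
Qed.

Lemma tail_indicator_near1 y : \forall N \near \oo, tail_indicator N y = 1.
Proof.
have [N1 xm] := dist_lt_tail_inf y.
have excess_pos : 0 < tail_excess N1 y.
  by rewrite /tail_excess lt_min ltr01 andbT powR_gt0 // lt_max subr_gt0 xm.
near=> N.
have N1N : (N1 <= N)%N by near: N; exact: nbhs_infty_ge.
have hN : 1 <= N%:R * tail_excess N1 y.
  by rewrite -ler_pdivrMr // mul1r; near: N; exact: nbhs_infty_ger.
rewrite /tail_indicator; apply: min_l; apply: le_trans hN _.
by rewrite ler_wpM2l // tail_excess_homo.
Unshelve. all: end_near.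
Qed.



Lemma dist_lt_tail_inf_contra : False.
Proof.
have indicator_cvg :
    rintegral mu (tail_indicator N) @[N --> \oo] --> rintegral mu (fun _ => 1).
  apply: (@rintegral_dominated_cvg _ _ _ mu _ _ (fun _ => 1)).
  - by move=> N; apply: (dcontinuous_measurable Hb); exact: dcontinuous_tail_indicator.
  - exact: measurable_cst.
  - exact: rintegrable_cst.
  - by move=> N y; rewrite ger0_norm ?tail_indicator_ge0 ?tail_indicator_le1.
  - by move=> y; apply: cvg_near_cst; exact: tail_indicator_near1.
rewrite rintegral_cst in indicator_cvg.
have half : 0 < 1 / 2 :> R by rewrite divr_gt0.
move/cvgrPdist_lt: indicator_cvg => /(_ _ half) /filter_ex [N indicator_N].
have indicator_int : rintegrable mu (tail_indicator N).
  apply: (bounded_rintegrable mu (M := 1)).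
    exact/(dcontinuous_measurable Hb)/dcontinuous_tail_indicator.
  by move=> y; rewrite ger0_norm ?tail_indicator_ge0 ?tail_indicator_le1.
have excess_int := rintegrable_tail_excess mu N.
have : rintegral mu (tail_indicator N) <= N%:R * rintegral mu (tail_excess N).
  rewrite -rintegralZ //; apply: le_rintegral => //; first exact: rintegrableZ.
  by move=> y; rewrite /tail_indicator ge_min lexx orbT.
have : N%:R * rintegral mu (tail_excess N) <= 0.
  by rewrite mulr_ge0_le0 // rintegral_tail_excess_le0.
move: indicator_N; rewrite ltr_norml => /andP[].
by move: (rintegral mu _) (N%:R * _) => a b *; lra.
Qed.

End DistLtTailInf.

Lemma exists_liminf_dist_le : exists y, forall N (e : R), 0 < e ->
  exists n, (N <= n)%N /\ d (z n) y < d x y + e.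
Proof.
apply: contrapT => no_y; apply: dist_lt_tail_inf_contra => y.
move/forallNP: no_y => /(_ y) /existsNP [N] /existsNP [e] /not_implyP [e0].
move/forallNP => far; exists N; apply: (@lt_le_trans _ _ (d x y + e)); first lra.
apply: tail_inf_ge => n Nn; rewrite leNgt; apply/negP => close.
by apply: (far n); split.
Qed.

End LiminfDist.

Section LimitMinimizer.
Context {R : realType} {dsp : measure_display} {X : measurableType dsp}
  (d : X -> X -> R) (Hm : is_metric d) (Hb : borel_of_metric d).
Variables (p : R) (nu : nat -> probability X R) (mu : probability X R).
Hypotheses (p1 : 1 <= p) (hcvg : tau_w_cvg d (p - 1) nu mu).
Hypotheses (hmu : in_P d (p - 1) mu) (hnu : forall n, in_P d (p - 1) (nu n)).

(* [W_p(nu n, x, x') <= W_p(nu n, x, z n) + W_p(nu n, z n, x')], where the second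
   term is nonpositive and the first one is [O(d (z n) x)]. *)
Lemma M_p_limit (z : nat -> X) x : (forall n, M_p d p (nu n) (z n)) ->
  d (z n) x @[n --> \oo] --> 0 -> M_p d p mu x.
Proof.
move=> hz zx; apply/(M_pP Hm Hb p1 hmu) => x'.
have q0 : 0 <= p - 1 by rewrite subr_ge0.
have p0 : 0 <= p by apply: le_trans p1.
pose c := p * 2 `^ (p - 1).
have c0 : 0 <= c by rewrite mulr_ge0 ?powR_ge0.
pose J P := rintegral P (fun y => d x y `^ (p - 1)).
have w_cvg : rintegral (nu n) (fun y => d x y `^ p - d x' y `^ p) @[n --> \oo] -->
    rintegral mu (fun y => d x y `^ p - d x' y `^ p).
  have cL0 : 0 <= c * d x x' by rewrite mulr_ge0 // metric_ge0.
  apply: (tau_w_cvg_growth Hm Hb q0 hcvg hmu hnu (x0 := x') _ cL0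
    (C := c * d x x' * d x x' `^ (p - 1))).
  - by rewrite mulr_ge0 ?powR_ge0.
  - by apply: dcontinuousB; apply: dcontinuous_dist_powR.
  - by move=> y; rewrite -mulrDr; exact: dist_powRB_le.
have bound_cvg : c * d (z n) x * (1 + J (nu n)) @[n --> \oo] --> c * 0 * (1 + J mu).
  apply: cvgM; first exact: cvgM (cvg_cst _) zx.
  by apply: cvgD; [exact: cvg_cst | exact: (tau_w_cvg_dist_powR Hm Hb q0 hcvg hmu)].
rewrite mulr0 mul0r in bound_cvg.
apply: (ler_cvg_to w_cvg bound_cvg).
move/cvgrPdist_le: zx => /(_ 1 ltr01) zx1; near=> n.
have dn1 : d (z n) x <= 1.
  by near: n; apply: filterS zx1 => k; rewrite sub0r normrN ger0_norm ?metric_ge0.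
have W_le0 := (M_pP Hm Hb p1 (hnu n) (z n)).1 (hz n) x'.
have dn0 := metric_ge0 Hm (z n) x.
have dnq : d (z n) x `^ (p - 1) <= 1 by move: (nneg_ler_powR q0 dn0 dn1); rewrite powR1.
rewrite (_ : (fun y => _) = fun y => (d (z n) y `^ p - d x' y `^ p)
  + (d x y `^ p - d (z n) y `^ p)); last by apply: funext => y; ring.
rewrite rintegralD; [|exact: dist_powRB_rintegrable..].
apply: le_trans (lerD W_le0 (rintegral_dist_powRB_le Hm Hb p1 (hnu n) (z n) x)) _.
by rewrite add0r ler_wpM2l ?mulr_ge0 // lerD2r.
Unshelve. all: end_near.
Qed.

End LimitMinimizer.

Lemma minimizers_subseq_cvg {R : realType} {dsp : measure_display}
  {X : measurableType dsp} (d : X -> X -> R) (Hm : is_metric d)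
  (Hb : borel_of_metric d) (c : (nat -> X) -> X -> Prop) (hc : weak_convergence d c)
  (p : R) (p1 : 1 <= p) (nu : nat -> probability X R) (mu : probability X R)
  (hcvg : tau_w_cvg d (p - 1) nu mu) (hmu : in_P d (p - 1) mu)
  (hnu : forall n, in_P d (p - 1) (nu n))
  (z : nat -> X) (hz : forall n, M_p d p (nu n) (z n)) :
  exists2 phi, increasing_index phi &
    exists2 x, M_p d p mu x & d (z (phi k)) x @[k --> \oo] --> 0.
Proof.
have [[_ c_subseq] [W1 [W2 W3]]] := hc.
pose o := z 0%N.
have [D0 [N _ zN]] := minimizers_bounded Hm Hb p1 hcvg hmu hnu o hz.
have phi1_incr := increasing_index_addn N.
have z1_bnd n : d (z (n + N)%N) o <= D0.
  by rewrite metricC //; apply/ltW/zN; rewrite /= leq_addl.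
have [phi2 [x [phi2_incr cx]]] := W1 _ (ex_intro _ o (ex_intro _ D0 z1_bnd)).
have phi12_incr := increasing_index_comp phi1_incr phi2_incr.
have hcvg12 := tau_w_cvg_subseq phi12_incr hcvg.
have z12_bnd n : d (z (phi2 n + N)%N) x <= D0 + d o x.
  by apply: le_trans (metric_triangle_le Hm _ o _) _; rewrite lerD2r.
have [y hy] := exists_liminf_dist_le Hm Hb p1 hcvg12 hmu (fun n => hnu _)
  (fun n => hz _) z12_bnd.
have [psi psi_incr zy] := subseq_cvg_liminf hy (W2 _ _ cx y).
have zx := W3 _ _ (c_subseq _ _ _ psi_incr cx) y zy.
exists ((addn^~ N \o phi2) \o psi).
  exact: increasing_index_comp phi12_incr psi_incr.
exists x => //.
exact: (M_p_limit Hm Hb p1 (tau_w_cvg_subseq psi_incr hcvg12) hmu (fun n => hnu _)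
  (fun n => hz _) zx).
Qed.

Unset Implicit Arguments.

Theorem corollary3p11 (R : realType) (dsp : measure_display)
  (X : measurableType dsp) (d : X -> X -> R)
  (Hmetric : is_metric d) (Hborel : borel_of_metric d)
  (Hsep : dseparable d) (Hweak : admits_weak_convergence d)
  (p : R) (hp : 1 <= p)
  (mu_ : nat -> probability X R) (mu : probability X R)
  (Hmu_ : forall n, in_P d (p - 1) (mu_ n)) (Hmu : in_P d (p - 1) mu)
  (Hcvg : tau_w_cvg d (p - 1) mu_ mu) :
  forall e : R, 0 < e ->
    \forall n \near \oo, forall xn : X, M_p d p (mu_ n) xn ->
      exists2 x : X, M_p d p mu x & d xn x < e.
Proof.
move=> e e0; have [c hc] := Hweak.
apply: contrapT => not_near.
have [phi phi_incr phi_far] := not_near_infty_subseq not_near.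
have /choice [z hz] k : exists xn, M_p d p (mu_ (phi k)) xn /\
    forall x, M_p d p mu x -> e <= d xn x.
  apply: contrapT => no_far; apply: (phi_far k) => xn Mxn.
  apply: contrapT => no_close; apply: no_far; exists xn; split => // x Mx.
  by rewrite leNgt; apply/negP => close; apply: no_close; exists x.
have [psi _ [x Mx zx]] := minimizers_subseq_cvg Hmetric Hborel hc hp
  (tau_w_cvg_subseq phi_incr Hcvg) Hmu (fun k => Hmu_ _) (fun k => (hz k).1).
move/cvgrPdist_lt: zx => /(_ e e0) /filter_ex [k].
rewrite sub0r normrN ger0_norm ?metric_ge0 //.
by apply/negP; rewrite -leNgt; exact: (hz (psi k)).2.
Qed.
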